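(* Let $\mathcal{H}$ be a real Hilbert space with orthonormal basis $(\varphi_\gamma)_{\gamma\in\Gamma}$, $\Gamma=\Gamma_1\cup\dots\cup\Gamma_n$ pairwise disjoint, $p_i\in[1,2]$, $p_\gamma=p_i$ for $\gamma\in\Gamma_i$, and weights $w_\gamma\ge c>0$. For $f\in\mathcal{H}$ let $|||f|||^P_{W,P}=\sum_\gamma w_\gamma|\langle f,\varphi_\gamma\rangle|^{p_\gamma}$. If a sequence $(v_k)$ in $\mathcal{H}$ converges weakly to $v$ and $\lim_{k\to\infty}|||v_k|||^P_{W,P}=|||v|||^P_{W,P}$, then $\lim_{k\to\infty}\|v-v_k\|=0$. *)

From HB Require Import structures.
From mathcomp Require Import all_boot all_order all_algebra.
From mathcomp Require Import all_classical all_reals all_analysis.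
Set Implicit Arguments. Unset Strict Implicit. Unset Printing Implicit Defensive.
Import Order.TTheory GRing.Theory Num.Theory.
Import numFieldNormedType.Exports.
Local Open Scope classical_set_scope.
Local Open Scope ring_scope.

(* ip is a real inner product on the (complete) normed space V inducing its
   norm: V is then a real Hilbert space. *)
Definition is_inner_product (R : realType) (V : completeNormedModType R)
    (ip : V -> V -> R) : Prop :=
  [/\ forall x y, ip x y = ip y x,
      forall a x y z, ip (a *: x + y) z = a * ip x z + ip y z
    & forall x, ip x x = `|x| ^+ 2].

Definition is_orthonormal_basis (R : realType) (V : completeNormedModType R)
    (ip : V -> V -> R) (G : Type) (phi : G -> V) : Prop :=
  [/\ forall g, ip (phi g) (phi g) = 1,
      forall g h, g <> h -> ip (phi g) (phi h) = 0
    & forall f, (forall g, ip f (phi g) = 0) -> f = 0].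

Definition weak_cvg (R : realType) (V : completeNormedModType R)
    (ip : V -> V -> R) (u : nat -> V) (l : V) : Prop :=
  forall y, (fun k => ip (u k) y) @ \oo --> ip l y.

Definition wnorm (R : realType) (V : completeNormedModType R)
    (ip : V -> V -> R) (G : choiceType) (phi : G -> V)
    (w p : G -> R) (f : V) : \bar R :=
  \esum_(g in [set: G]) ((w g * powR `|ip f (phi g)| (p g))%:E).

From HB Require Import structures.
From mathcomp Require Import all_boot all_order all_algebra.
From mathcomp Require Import all_classical all_reals all_analysis.
From mathcomp Require Import lra.
Import Order.TTheory GRing.Theory Num.Theory.
Import numFieldNormedType.Exports.
Local Open Scope classical_set_scope.
Local Open Scope ring_scope.

(** Write [a_g(u) = w_g |<u, phi_g>|^(p_g)]. Fix a finite set [F] of indices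
    carrying all but [d] of the finite sum [sum_g a_g(v)]. Convergence of the
    total sums together with the termwise convergence [a_g(v_k) -> a_g(v)]
    (from weak convergence) shows that for large [k] the terms of [v_k] off
    [F] also sum to at most [d]. Off [F] every term is then at most [d <= c
    <= w_g], so the coefficient has modulus at most 1 and, as [p_g <= 2],
    [c <u, phi_g>^2 <= a_g(u)]: the squared coefficients of [v - v_k] off [F]
    sum to at most [4 d / c]. On the finite set [F] they tend to 0 by weak
    convergence, and [|x|^2 <= sum_g <x, phi_g>^2] (which uses the
    completeness of [V] and of the basis) gives [|v - v_k|^2 <= d + 4 d / c]. *)

Section SeqSums.
Context {R : numDomainType} {T : eqType}.

Lemma ler_sum_uniq_subset (h : T -> R) (s t : seq T) :
  (forall g, 0 <= h g) -> uniq s -> uniq t -> {subset s <= t} ->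
  \sum_(g <- s) h g <= \sum_(g <- t) h g.
Proof.
move=> h_ge0 us ut st; rewrite [leRHS](bigID (mem s)) /=.
have -> : \sum_(g <- t | g \in s) h g = \sum_(g <- s) h g.
  rewrite -big_filter; apply: perm_big; apply: uniq_perm => [||g].
  - exact: filter_uniq.
  - exact: us.
  - by rewrite mem_filter andb_idr //; apply: st.
by rewrite lerDl sumr_ge0.
Qed.

Lemma sum_le_split (h : T -> R) (F t : seq T) :
  (forall g, 0 <= h g) -> uniq F -> uniq t ->
  \sum_(g <- t) h g <= \sum_(g <- F) h g + \sum_(g <- t | g \notin F) h g.
Proof.
move=> h_ge0 uF ut; rewrite (bigID (mem F)) /= lerD2r -big_filter.
apply: ler_sum_uniq_subset => //; first exact: filter_uniq.
by move=> g; rewrite mem_filter => /andP[].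
Qed.

End SeqSums.

Section FiniteSumsOfEsum.
Context {R : realType} {G : choiceType} (h : G -> R).
Local Notation esum_h := (\esum_(g in [set: G]) (h g)%:E).

Lemma sum_le_esum (s : seq G) : uniq s -> ((\sum_(g <- s) h g)%:E <= esum_h)%E.
Proof.
move=> us; rewrite -sumEFin (fsbig_seq _ _ us); apply: esum_ge.
by exists [set` s] => //; split => //; exact: finite_seq.
Qed.

Lemma esum_le_of_sum_le (M : R) :
  (forall s : seq G, uniq s -> \sum_(g <- s) h g <= M) -> (esum_h <= M%:E)%E.
Proof.
move=> hM; apply: ge_ereal_sup => _ [X [finX _] <-].
by rewrite fsbig_finite // sumEFin lee_fin hM // finmap.fset_uniq.
Qed.

Lemma esum_sum_gt (S x : R) : esum_h = S%:E -> x < S ->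
  exists2 s : seq G, uniq s & x < \sum_(g <- s) h g.
Proof.
move=> hS xS; have : (x%:E < esum_h)%E by rewrite hS lte_fin.
move=> /ereal_sup_gt [_ [X [finX _] <-]].
rewrite fsbig_finite // sumEFin lte_fin => lt.
by exists (finmap.enum_fset (fset_set X)) => //; exact: finmap.fset_uniq.
Qed.

Lemma sum_le_esum_sub (S : R) (F t : seq G) : esum_h = S%:E ->
  uniq F -> uniq t -> {in t, forall g, g \notin F} ->
  \sum_(g <- t) h g <= S - \sum_(g <- F) h g.
Proof.
move=> hS uF ut tF; rewrite lerBrDr -big_cat -lee_fin -hS sum_le_esum //.
rewrite cat_uniq ut uF andbT.
by apply/hasPn => g gF; apply: contraL gF; apply: tF.
Qed.

Hypothesis h_ge0 : forall g, 0 <= h g.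

Lemma esum_exhausting_seq (S : R) : esum_h = S%:E ->
  exists B : nat -> seq G, [/\ forall m, uniq (B m),
    forall m n, (m <= n)%N -> {subset B m <= B n} &
    forall m, S - m.+1%:R^-1 < \sum_(g <- B m) h g].
Proof.
move=> hS.
have A_ex m : exists s : seq G, uniq s /\ S - m.+1%:R^-1 < \sum_(g <- s) h g.
  have [|s us lt] := @esum_sum_gt S (S - m.+1%:R^-1) hS; last by exists s.
  by rewrite ltrBlDr ltrDl invr_gt0 ltr0n.
have [A A_gt] := choice A_ex.
pose B m := undup (flatten [seq A i | i <- iota 0 m.+1]).
have AB i m : (i <= m)%N -> {subset A i <= B m}.
  move=> im g gA; rewrite mem_undup; apply/flattenP; exists (A i) => //.
  by apply: map_f; rewrite mem_iota add0n ltnS.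
exists B; split => [m|m n mn g|m]; first exact: undup_uniq.
  rewrite mem_undup => /flattenP [_ /mapP [i + ->]].
  by rewrite mem_iota add0n ltnS => im; apply: AB; apply: leq_trans mn.
have [uA ltA] := A_gt m; apply: (lt_le_trans ltA).
by apply: ler_sum_uniq_subset => //; [exact: undup_uniq | exact: AB].
Qed.

End FiniteSumsOfEsum.

Section Powers.
Context {R : realType}.

Lemma sqr_le_powR (b p : R) :
  1 <= p <= 2 -> powR `|b| p <= 1 -> b ^+ 2 <= powR `|b| p.
Proof.
move=> /andP[p_ge1 p_le2] bp_le1.
have [b_le1|b_gt1] := leP `|b| 1; last first.
  by have := le1r_powR (ltW b_gt1) p_ge1; lra.
have [->|b_neq0] := eqVneq b 0; first by rewrite expr0n /= powR_ge0.
rewrite -real_normK ?num_real // -powR_mulrn //.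
by apply: ger_powR => //; rewrite normr_gt0 b_neq0.
Qed.

Lemma sqr_le_wpowR (c w p b : R) : 0 < c -> c <= w -> 1 <= p <= 2 ->
  w * powR `|b| p <= c -> c * b ^+ 2 <= w * powR `|b| p.
Proof.
move=> c_gt0 c_le_w p12 wb_le_c; have bp_ge0 := powR_ge0 `|b| p.
have bp_le1 : powR `|b| p <= 1 by nra.
by have := sqr_le_powR _ _ p12 bp_le1; nra.
Qed.

Lemma cvg_powR {T : Type} {F : set_system T} {FF : Filter F}
    (f : T -> R) (a p : R) :
  0 < a -> f @ F --> a -> (fun t => powR (f t) p) @ F --> powR a p.
Proof.
move=> a_gt0 fa; rewrite {2}/powR gt_eqF //.
have ln_cvg : (fun t => ln (f t)) @ F --> ln a.
  by apply: continuous_cvg => //; exact: continuous_ln.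
have exp_cvg : (fun t => expR (p * ln (f t))) @ F --> expR (p * ln a).
  apply: continuous_cvg; first exact: continuous_expR.
  by apply: cvgM; [exact: cvg_cst | exact: ln_cvg].
apply: cvg_trans exp_cvg; apply: near_eq_cvg.
by apply: filterS (cvgr_gt _ fa _ a_gt0) => t /gt_eqF f_neq0; rewrite /powR f_neq0.
Qed.

Lemma cvg_powR_norm {T : Type} {F : set_system T} {FF : Filter F}
    (f : T -> R) (a p : R) :
  1 <= p -> f @ F --> a -> (fun t => powR `|f t| p) @ F --> powR `|a| p.
Proof.
move=> p_ge1 fa; have [a0|a_neq0] := eqVneq a 0; last first.
  by apply: cvg_powR; [rewrite normr_gt0 | exact: cvg_norm].
have p_neq0 : p != 0 by rewrite gt_eqF // (lt_le_trans ltr01).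
rewrite a0 normr0 powR0 //; apply/cvgr0Pnorm_le => e e_gt0.
have : \forall t \near F, `|f t| <= Num.min e 1.
  by move: fa; rewrite a0 => /cvgr0Pnorm_le; apply; rewrite lt_min e_gt0 ltr01.
apply: filterS => t; rewrite le_min => /andP[fe f1].
rewrite ger0_norm ?powR_ge0 //; apply: le_trans fe.
have [->|f_neq0] := eqVneq (f t) 0; first by rewrite normr0 powR0.
by apply: ge1r_powR => //; rewrite normr_gt0 f_neq0.
Qed.

End Powers.

Section InnerProduct.
Context {R : realType} {V : completeNormedModType R} {ip : V -> V -> R}.
Hypothesis ipV : is_inner_product ip.

Lemma ipC x y : ip x y = ip y x. Proof. by case: ipV. Qed.

Lemma ipxx x : ip x x = `|x| ^+ 2. Proof. by case: ipV. Qed.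

Lemma ipDl x y z : ip (x + y) z = ip x z + ip y z.
Proof. by case: ipV => _ ipL _; rewrite -[x in LHS]scale1r ipL mul1r. Qed.

Lemma ip0l z : ip 0 z = 0.
Proof. by apply: (addrI (ip 0 z)); rewrite -ipDl !addr0. Qed.

Lemma ipZl a x z : ip (a *: x) z = a * ip x z.
Proof. by case: ipV => _ ipL _; rewrite -[_ *: _]addr0 ipL ip0l addr0. Qed.

Lemma ipBl x y z : ip (x - y) z = ip x z - ip y z.
Proof. by rewrite ipDl -scaleN1r ipZl mulN1r. Qed.

Lemma ipBr x y z : ip z (x - y) = ip z x - ip z y.
Proof. by rewrite ipC ipBl ipC (ipC y). Qed.

Lemma ip_suml (I : Type) (s : seq I) (f : I -> V) z :
  ip (\sum_(i <- s) f i) z = \sum_(i <- s) ip (f i) z.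
Proof.
elim: s => [|i s IH]; first by rewrite !big_nil ip0l.
by rewrite !big_cons ipDl IH.
Qed.

Context {G : choiceType} {phi : G -> V}.
Hypothesis phiB : is_orthonormal_basis ip phi.

Lemma ip_basis g h : ip (phi g) (phi h) = (g == h)%:R.
Proof.
case: phiB => nphi ophi _; case: eqVneq => [->|]; first exact: nphi.
by move=> /eqP; apply: ophi.
Qed.

Lemma ler_norm_coef x g : `|ip x (phi g)| <= `|x|.
Proof.
set t := ip x (phi g).
have tx : ip (t *: phi g) x = t * t by rewrite ipZl ipC.
have xt : ip x (t *: phi g) = t * t by rewrite ipC tx.
have tt : ip (t *: phi g) (t *: phi g) = t * t.
  by rewrite ipZl ipC ipZl ip_basis eqxx mulr1.
have := exprn_ge0 2 (normr_ge0 (x - t *: phi g)).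
rewrite -ipxx ipBl !ipBr tx xt tt ipxx => ge0.
by rewrite -ler_sqr ?nnegrE // real_normK ?num_real //; lra.
Qed.

Lemma cvg_coef {T : Type} {F : set_system T} {FF : Filter F}
    {f : T -> V} {l : V} g :
  f @ F --> l -> (fun t => ip (f t) (phi g)) @ F --> ip l (phi g).
Proof.
move=> /cvgrPdist_lt fl; apply/cvgrPdist_lt => e /fl; apply: filterS => t.
by rewrite -ipBl; apply: le_lt_trans (ler_norm_coef _ _).
Qed.

Definition basis_comb (s : seq G) (a : G -> R) : V := \sum_(g <- s) a g *: phi g.

Lemma ip_basis_combl s a z :
  ip (basis_comb s a) z = \sum_(g <- s) a g * ip z (phi g).
Proof. by rewrite ip_suml; apply: eq_bigr => g _; rewrite ipZl ipC. Qed.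

Lemma coef_basis_comb s a h : uniq s ->
  ip (basis_comb s a) (phi h) = if h \in s then a h else 0.
Proof.
move=> us; rewrite ip_basis_combl.
under eq_bigr => g _ do rewrite ip_basis mulr_natr mulrb (eq_sym h).
case: ifP => hs.
  by rewrite (bigD1_seq h) //= eqxx big1 ?addr0 // => g /negbTE ->.
by rewrite big1_seq // => g /andP[_ gs]; case: eqP => // gh; rewrite -gh gs in hs.
Qed.

Lemma norm_basis_comb_sub s s' a : uniq s -> uniq s' -> {subset s <= s'} ->
  `|basis_comb s' a - basis_comb s a| ^+ 2 =
  \sum_(g <- s') a g ^+ 2 - \sum_(g <- s) a g ^+ 2.
Proof.
move=> us us' ss'.
have ipss t t' : uniq t' -> {subset t <= t'} ->
    ip (basis_comb t a) (basis_comb t' a) = \sum_(g <- t) a g ^+ 2.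
  move=> ut' tt'; rewrite ip_basis_combl big_seq [RHS]big_seq.
  by apply: eq_bigr => g gt; rewrite coef_basis_comb // tt' // expr2.
rewrite -ipxx ipBl !ipBr (ipC (basis_comb s' a)) (ipss s s') // !ipss //.
lra.
Qed.

Lemma norm_basis_comb s a : uniq s ->
  `|basis_comb s a| ^+ 2 = \sum_(g <- s) a g ^+ 2.
Proof.
move=> us; have nil_sub : {subset [::] <= s} by [].
have := norm_basis_comb_sub [::] s a isT us nil_sub.
by rewrite [basis_comb [::] a]big_nil big_nil !subr0.
Qed.

Section ExhaustingSums.
Context {a : G -> R} {S : R} {B : nat -> seq G}.
Hypotheses (uB : forall m, uniq (B m))
  (B_mono : forall m n, (m <= n)%N -> {subset B m <= B n})
  (B_gt : forall m, S - m.+1%:R^-1 < \sum_(g <- B m) a g ^+ 2)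
  (sum_le : forall t, uniq t -> \sum_(g <- t) a g ^+ 2 <= S).

Lemma cvg_basis_comb_exhausting : cvg (basis_comb (B m) a @[m --> \oo]).
Proof.
apply: cauchy_cvg; apply: cauchy_exP => e e_gt0.
have [m _ me] := near_infty_natSinv_lt (PosNum (exprn_gt0 2 e_gt0)).
exists (basis_comb (B m) a), m => // n /= mn.
rewrite -ball_normE /= distrC -ltr_sqr ?nnegrE ?(ltW e_gt0) //.
rewrite (norm_basis_comb_sub _ _ _ (uB m) (uB n) (B_mono _ _ mn)).
have := me m (leqnn m); have := B_gt m; have := sum_le _ (uB n).
(* [lra] does not treat [m.+1%:R^-1] as an atom, hence the generalization. *)
move: (m.+1%:R^-1) => r /=; lra.
Qed.

Lemma coef_lim_basis_comb_exhausting g :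
  ip (lim (basis_comb (B m) a @[m --> \oo])) (phi g) = a g.
Proof.
have coef_ev : \forall m \near \oo, ip (basis_comb (B m) a) (phi g) = a g.
  have [ag0|ag_neq0] := eqVneq (a g) 0.
    by near=> m; rewrite coef_basis_comb // ag0; case: ifP.
  have ag2_gt0 : 0 < a g ^+ 2 by rewrite lt0r sqrf_eq0 ag_neq0 sqr_ge0.
  have [m _ ma] := near_infty_natSinv_lt (PosNum ag2_gt0).
  have gB : g \in B m.
    apply: contraT => gNB; have := sum_le (g :: B m).
    rewrite /= gNB uB big_cons => /(_ isT).
    have := ma m (leqnn m); have := B_gt m; move: (m.+1%:R^-1) => r /=; lra.
  by exists m => // n /= mn; rewrite coef_basis_comb // (B_mono _ _ mn).
apply: (cvg_unique (@norm_hausdorff _ R^o) _ (cvg_near_cst _ coef_ev)).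
by apply: cvg_coef; apply: cvg_basis_comb_exhausting.
Unshelve. all: by end_near.
Qed.

End ExhaustingSums.

Lemma sqr_norm_le_esum_coef x :
  ((`|x| ^+ 2)%:E <= \esum_(g in [set: G]) (ip x (phi g) ^+ 2)%:E)%E.
Proof.
have a2_ge0 g : 0 <= ip x (phi g) ^+ 2 := sqr_ge0 _.
have : (0 <= \esum_(g in [set: G]) (ip x (phi g) ^+ 2)%:E)%E.
  by apply: esum_ge0 => g _; rewrite lee_fin.
case E : (\esum_(g in [set: G]) _)%E => [S| |] // _; last by rewrite leey.
have [B [uB B_mono B_gt]] := esum_exhausting_seq _ a2_ge0 _ E.
have sum_le t : uniq t -> \sum_(g <- t) ip x (phi g) ^+ 2 <= S.
  by move=> ut; rewrite -lee_fin -E; exact: sum_le_esum.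
pose y m := basis_comb (B m) (fun g => ip x (phi g)).
have y_cvg : cvg (y @ \oo) := cvg_basis_comb_exhausting uB B_mono B_gt sum_le.
have -> : x = lim (y @ \oo).
  apply/subr0_eq; case: phiB => _ _; apply=> g.
  by rewrite ipBl (coef_lim_basis_comb_exhausting uB B_mono B_gt sum_le) subrr.
have norm2_cvg : (fun m => `|y m| ^+ 2) @ \oo --> `|lim (y @ \oo)| ^+ 2.
  apply: (@continuous_cvg _ _ _ _ _ (fun m => `|y m|) (fun r : R => r ^+ 2)).
    exact: exprn_continuous.
  exact: cvg_norm.
rewrite lee_fin leNgt; apply/negP.
move=> /(cvgr_gt _ norm2_cvg) [m _ /(_ m (leqnn m))].
by rewrite /= norm_basis_comb // ltNge sum_le.
Qed.

Lemma sqr_norm_le_split x (F : seq G) (d1 d2 : R) : uniq F ->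
  \sum_(g <- F) ip x (phi g) ^+ 2 <= d1 ->
  (forall t, uniq t -> {in t, forall g, g \notin F} ->
    \sum_(g <- t) ip x (phi g) ^+ 2 <= d2) ->
  `|x| ^+ 2 <= d1 + d2.
Proof.
move=> uF head_le tail_le; rewrite -lee_fin.
apply: (le_trans (sqr_norm_le_esum_coef x)).
apply: (esum_le_of_sum_le (fun g => ip x (phi g) ^+ 2)) => t ut.
apply: (le_trans (sum_le_split _ _ _ (fun g => sqr_ge0 _) uF ut)).
apply: lerD => //; rewrite -big_filter; apply: tail_le; first exact: filter_uniq.
by move=> g; rewrite mem_filter => /andP[].
Qed.

Section RadonRiesz.
Context {a : V -> G -> R} {c : R}.
Hypotheses (c_gt0 : 0 < c)
  (a_small : forall u g, a u g <= c -> c * ip u (phi g) ^+ 2 <= a u g).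

Lemma tail_sqr_coef_sub_le u v (Su Sv d : R) (F t : seq G) :
  \esum_(g in [set: G]) (a u g)%:E = Su%:E ->
  \esum_(g in [set: G]) (a v g)%:E = Sv%:E ->
  uniq F -> Su - \sum_(g <- F) a u g <= d -> Sv - \sum_(g <- F) a v g <= d ->
  d <= c -> uniq t -> {in t, forall g, g \notin F} ->
  c * \sum_(g <- t) ip (v - u) (phi g) ^+ 2 <= 4 * d.
Proof.
move=> aSu aSv uF Su_d Sv_d d_le_c ut tF.
have tail_le x Sx : \esum_(g in [set: G]) (a x g)%:E = Sx%:E ->
    Sx - \sum_(g <- F) a x g <= d ->
    \sum_(g <- t) a x g <= d /\ {in t, forall g, c * ip x (phi g) ^+ 2 <= a x g}.
  move=> aSx Sx_d; split.
    exact: le_trans (sum_le_esum_sub _ _ _ _ aSx uF ut tF) Sx_d.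
  move=> g gt; apply: a_small; apply: le_trans d_le_c; apply: le_trans Sx_d.
  have gF : {in [:: g], forall g', g' \notin F}.
    by move=> g'; rewrite inE => /eqP ->; apply: tF.
  by have := sum_le_esum_sub _ _ _ [:: g] aSx uF isT gF; rewrite big_seq1.
have [tu cu] := tail_le u Su aSu Su_d; have [tv cv] := tail_le v Sv aSv Sv_d.
rewrite mulr_sumr; apply: (@le_trans _ _ (\sum_(g <- t) (2 * a v g + 2 * a u g))).
  rewrite big_seq [leRHS]big_seq; apply: ler_sum => g gt; rewrite ipBl.
  have := mulr_ge0 (ltW c_gt0) (sqr_ge0 (ip v (phi g) + ip u (phi g))).
  by have := cu g gt; have := cv g gt; lra.
by rewrite big_split -!mulr_sumr /=; lra.
Qed.

Lemma esum_radon_riesz {v : V} {vs : nat -> V} {S : R} :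
  (forall g, (fun k => ip (vs k) (phi g)) @ \oo --> ip v (phi g)) ->
  (forall g, (fun k => a (vs k) g) @ \oo --> a v g) ->
  \esum_(g in [set: G]) (a v g)%:E = S%:E ->
  (fun k => \esum_(g in [set: G]) (a (vs k) g)%:E) @ \oo --> S%:E ->
  (fun k => `|v - vs k|) @ \oo --> 0.
Proof.
move=> coef_cvg a_cvg aS /fine_cvgP[fin_vs S_cvg].
apply/cvgr0Pnorm_le => e e_gt0.
pose d := Num.min c (e ^+ 2 * c / (c + 4)).
have c4_gt0 : 0 < c + 4 by rewrite addr_gt0.
have d_gt0 : 0 < d by rewrite lt_min c_gt0 divr_gt0 // mulr_gt0 // exprn_gt0.
have d_le_c : d <= c by rewrite ge_min lexx.
have d_small : c * d + 4 * d <= c * e ^+ 2.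
  have : d <= e ^+ 2 * c / (c + 4) by rewrite ge_min lexx orbT.
  by rewrite ler_pdivlMr //; lra.
have [|F uF F_gt] := esum_sum_gt _ _ (S - d) aS; first by lra.
have S_d : S - \sum_(g <- F) a v g <= d by lra.
have tail_cvg : (fun k => fine (\esum_(g in [set: G]) (a (vs k) g)%:E) -
    \sum_(g <- F) a (vs k) g) @ \oo --> S - \sum_(g <- F) a v g.
  by apply: cvgB => //; apply: cvg_big => //; exact: add_continuous.
have head_cvg : (fun k => \sum_(g <- F) ip (v - vs k) (phi g) ^+ 2) @ \oo -->
    \sum_(g <- F) (0 : R) ^+ 2.
  apply: cvg_big => // [|g _]; first exact: add_continuous.
  apply: (@continuous_cvg _ _ _ _ _ _ (fun r : R => r ^+ 2)).
    exact: exprn_continuous.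
  apply/cvgr0Pnorm_lt => e' e'_gt0.
  move/cvgrPdist_lt : (coef_cvg g) => /(_ e' e'_gt0).
  by apply: filterS => k; rewrite ipBl.
rewrite big1 in head_cvg; last by move=> g _; rewrite expr0n.
near=> k.
have /fineK aSk : \esum_(g in [set: G]) (a (vs k) g)%:E \is a fin_num by near: k.
have tail_k : fine (\esum_(g in [set: G]) (a (vs k) g)%:E) -
    \sum_(g <- F) a (vs k) g <= d.
  by near: k; apply: (cvgr_le _ tail_cvg); lra.
have head_k : \sum_(g <- F) ip (v - vs k) (phi g) ^+ 2 <= d.
  by near: k; apply: (cvgr_le _ head_cvg).
have tail_le t : uniq t -> {in t, forall g, g \notin F} ->
    \sum_(g <- t) ip (v - vs k) (phi g) ^+ 2 <= 4 * d / c.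
  move=> ut tF; rewrite ler_pdivlMr // mulrC.
  exact: tail_sqr_coef_sub_le (esym aSk) aS uF tail_k S_d d_le_c ut tF.
have cd : c * (d + 4 * d / c) = c * d + 4 * d.
  by rewrite mulrDr mulrCA mulfV ?gt_eqF // mulr1.
rewrite normr_id -ler_sqr ?nnegrE ?(ltW e_gt0) // -(ler_pM2l c_gt0).
apply: (le_trans _ d_small); rewrite -cd ler_pM2l //.
exact: sqr_norm_le_split uF head_k tail_le.
Unshelve. all: by end_near.
Qed.

End RadonRiesz.

End InnerProduct.

Theorem lemma6p16 (R : realType) (V : completeNormedModType R)
    (ip : V -> V -> R) (G : choiceType) (phi : G -> V)
    (n : nat) (part : G -> 'I_n) (pexp : 'I_n -> R) (w : G -> R) (c : R)
    (v : V) (vs : nat -> V) :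
  is_inner_product ip ->
  is_orthonormal_basis ip phi ->
  (forall i, 1 <= pexp i <= 2) ->
  0 < c -> (forall g, c <= w g) ->
  weak_cvg ip vs v ->
  wnorm ip phi w (fun g => pexp (part g)) v \is a fin_num ->
  (fun k => wnorm ip phi w (fun g => pexp (part g)) (vs k)) @ \oo -->
    wnorm ip phi w (fun g => pexp (part g)) v ->
  (fun k => `|v - vs k|) @ \oo --> 0.
Proof.
move=> ipV phiB p12 c_gt0 c_le_w vs_v fin_v wnorm_vs.
pose a u g := w g * powR `|ip u (phi g)| (pexp (part g)).
have a_small u g : a u g <= c -> c * ip u (phi g) ^+ 2 <= a u g.
  exact: sqr_le_wpowR c_gt0 (c_le_w g) (p12 (part g)).
have a_cvg g : (fun k => a (vs k) g) @ \oo --> a v g.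
  apply: cvgM; first exact: cvg_cst.
  by apply: cvg_powR_norm (vs_v (phi g)); case/andP: (p12 (part g)).
have wnorm_v := esym (fineK fin_v).
rewrite [X in _ --> X]wnorm_v in wnorm_vs.
have := esum_radon_riesz ipV phiB c_gt0 a_small (fun g => vs_v (phi g)) a_cvg.
by apply; [exact: wnorm_v | exact: wnorm_vs].
Qed.
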